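(* Let $\mathcal{T}_2$ be the set of $s\in\mathcal{A}^*$ with $|s|\ne\mathsf{rmin}(s)+1$ and $\mathrm{sebr}(s)=0$. For every $n$ there is a bijection $$f_2:\mathcal{T}_2\cap\mathcal{A}_n\to\{(i,s^* ):s^*\in\mathcal{A}^*\cap\mathcal{A}_{n-1},\ \mathsf{rpos}(s^* )\le i<\mathsf{rmin}(s^* )\}$$ of the form $f_2(s)=(\mathsf{rpos}(s),s^* )$ with $\mathsf{asc}(s)=\mathsf{asc}(s^* )$, $\mathsf{max}(s)=\mathsf{max}(s^* )$, $\mathsf{ealm}(s)=\mathsf{ealm}(s^* )$, $\mathsf{rmin}(s)=\mathsf{rmin}(s^* )$, $\mathsf{zero}(s)=\mathsf{zero}(s^* )+\chi(\mathsf{rpos}(s)=0)$ and $\mathsf{rep}(s)=\mathsf{rep}(s^* )+1$.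
   Context: For a sequence $s$, $\mathsf{asc}(s)=|\{i:s_i<s_{i+1}\}|$. An ascent sequence is a sequence $s=(s_1,\dots,s_n)$ of non-negative integers with $s_1=0$, $s_i\le\mathsf{asc}(s_1,\dots,s_{i-1})+1$ for $i\ge2$; $\mathcal{A}_n$ is the set of those of length $n$, $|s|$ the length; $\mathcal{A}^*$ is the set of all ascent sequences except those of the form $(0,1,\dots,|s|-1)$. $\mathsf{rep}(s)=|s|-|\{s_i\}|$; $\mathsf{zero}(s)=|\{i:s_i=0\}|$; $\mathsf{max}(s)=|\{i:s_i=i-1\}|$; $\mathsf{ealm}(s)=s_{\mathsf{max}(s)+1}$ if $\mathsf{max}(s)\ne|s|$, else $0$. A right-to-left minimum is an entry $s_i$ with $s_i<s_j$ for all $j>i$; $\mathsf{rmin}(s)$ is their number; they are indexed $0,\dots,\mathsf{rmin}(s)-1$ from left to right, with values $\mathrm{Rmin}(s)_m$ and positions $\mathrm{Prm}(s)_m$. $\mathsf{rpos}(s)$: $0$ if $\mathsf{rmin}(s)=|s|$; otherwise the maximal $m$ such that the value $\mathrm{Rmin}(s)_m$ occurs at least twice after position $\mathrm{Prm}(s)_{m-1}$ (for $m=0$: at least twice in $s$), and $0$ if none. $\mathrm{sebr}(s)$ is the smallest entry strictly between the two rightmost occurrences of $\mathrm{Rmin}(s)_{\mathsf{rpos}(s)}$, and $0$ if they are adjacent. $\chi(P)=1$ if $P$ holds, else $0$. *)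

(* sequences of naturals (0-indexed positions). *)
From mathcomp Require Import all_boot.
Set Implicit Arguments. Unset Strict Implicit. Unset Printing Implicit Defensive.

Definition asc (s : seq nat) : nat :=
  count (fun i => nth 0 s i < nth 0 s i.+1) (iota 0 (size s).-1).

Definition is_ascent (s : seq nat) : bool :=
  (0 < size s) && (nth 0 s 0 == 0) &&
  all (fun i => nth 0 s i <= (asc (take i s)).+1) (iota 1 (size s).-1).

Definition inA (n : nat) (s : seq nat) : bool := is_ascent s && (size s == n).

Definition inAstar (s : seq nat) : bool := is_ascent s && (s != iota 0 (size s)).

Definition rep (s : seq nat) : nat := size s - size (undup s).
Definition zero (s : seq nat) : nat := count (fun x => x == 0) s.
(* max(s) = #{i : s_i = i-1} (1-indexed), i.e. #{i : s_i = i} 0-indexed *)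
Definition maxs (s : seq nat) : nat :=
  count (fun i => nth 0 s i == i) (iota 0 (size s)).
(* ealm(s) = s_{max(s)+1} (1-indexed) if max(s) <> |s|, else 0 *)
Definition ealm (s : seq nat) : nat :=
  if maxs s != size s then nth 0 s (maxs s) else 0.

Definition is_rmin (s : seq nat) (i : nat) : bool :=
  all (fun j => nth 0 s i < nth 0 s j) (iota i.+1 (size s - i.+1)).
Definition Prm (s : seq nat) : seq nat := filter (is_rmin s) (iota 0 (size s)).
Definition Rmin (s : seq nat) : seq nat := map (nth 0 s) (Prm s).
Definition rmin (s : seq nat) : nat := size (Prm s).

Definition rpos_cond (s : seq nat) (m : nat) : bool :=
  if m == 0 then 2 <= count (fun x => x == nth 0 (Rmin s) 0) s
  else 2 <= count (fun x => x == nth 0 (Rmin s) m)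
                  (drop (nth 0 (Prm s) m.-1).+1 s).

Definition rpos (s : seq nat) : nat :=
  if rmin s == size s then 0
  else foldr maxn 0 (filter (rpos_cond s) (iota 0 (rmin s))).

(* smallest entry strictly between the two rightmost occurrences of
   Rmin_{rpos}; 0 if they are adjacent (or if there are fewer than two) *)
Definition sebr (s : seq nat) : nat :=
  let v := nth 0 (Rmin s) (rpos s) in
  let occ := filter (fun i => nth 0 s i == v) (iota 0 (size s)) in
  if size occ < 2 then 0 else
  let p := nth 0 occ (size occ - 2) in
  let q := nth 0 occ (size occ - 1) in
  let b := take (q - p.+1) (drop p.+1 s) in
  if b is x :: b' then foldr minn x b' else 0.

Definition inT2 (s : seq nat) : bool :=
  inAstar s && (size s != (rmin s).+1) && (sebr s == 0).

Definition target2 (n : nat) (p : nat * seq nat) : bool :=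
  inAstar p.2 && inA n.-1 p.2 && (rpos p.2 <= p.1 < rmin p.2).

From mathcomp Require Import all_boot zify.
Set Implicit Arguments. Unset Strict Implicit. Unset Printing Implicit Defensive.

(* Let m = rpos(s), let q be the position of the m-th right-to-left minimum of s
   and v = s_q.  Every entry strictly between the last two occurrences of v is
   positive (it exceeds the previous right-to-left minimum, or differs from
   v = 0 when m = 0), so sebr(s) = 0 forces s_{q-1} = v.  Deleting s_q gives t,
   in which q - 1 is the m-th right-to-left minimum and rpos(t) <= m; conversely
   repeating the i-th right-to-left minimum of t, for rpos(t) <= i < rmin(t),
   yields an element of T_2 with rpos equal to i.  Repeating an entry preserves
   the ascent condition and asc, shifts the right-to-left minima and adds one
   repetition.  It preserves max and ealm because t has no fixed point t_k = k
   at or after the repeated position: such a fixed point would make all earlier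
   positions fixed right-to-left minima and push rpos(t) beyond i. *)

(** * Counting over initial segments *)

Lemma iota0_split a n : a <= n -> iota 0 n = iota 0 a ++ iota a (n - a).
Proof. by move=> le_an; rewrite -[iota a _]/(iota (0 + a) _) -iotaD subnKC. Qed.

Section CountIota.
Variable P : pred nat.

Lemma count_iotaS n : count P (iota 0 n.+1) = count P (iota 0 n) + P n.
Proof. by rewrite -addn1 iotaD count_cat /= addn0. Qed.

Lemma count_iota_leq n : count P (iota 0 n) <= n.
Proof. by rewrite -[leqRHS](size_iota 0) count_size. Qed.

Lemma leq_count_iota a b : a <= b -> count P (iota 0 a) <= count P (iota 0 b).
Proof. by move=> le_ab; rewrite (iota0_split le_ab) count_cat leq_addr. Qed.

Lemma ltn_count_iota a b : a < b -> P a -> count P (iota 0 a) < count P (iota 0 b).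
Proof.
by move=> lt_ab Pa; apply: leq_trans (leq_count_iota lt_ab); rewrite count_iotaS Pa addn1.
Qed.

Lemma count_iota_two a b n : a < b < n -> P a -> P b -> 1 < count P (iota 0 n).
Proof.
case/andP=> lt_ab lt_bn Pa Pb.
by have := ltn_count_iota lt_ab Pa; have := ltn_count_iota lt_bn Pb; lia.
Qed.

Lemma count_iota_all k : (count P (iota 0 k) == k) = all P (iota 0 k).
Proof. by rewrite all_count size_iota. Qed.

Lemma count_pred0_in (s : seq nat) : {in s, forall x, ~~ P x} -> count P s = 0.
Proof. by move=> nP; apply/eqP; rewrite -leqn0 leqNgt -has_count; apply/hasPn. Qed.

Lemma count_iota_split d q n : d <= q < n ->
  count P (iota d (n - d)) =
  count P (iota d (q - d)) + P q + count P (iota q.+1 (n - q.+1)).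
Proof.
case/andP=> le_dq lt_qn; have -> : n - d = (q - d) + (n - q.+1).+1 by lia.
by rewrite iotaD count_cat subnKC //= addnA.
Qed.

Lemma nth_filter_iota n i : i < count P (iota 0 n) ->
  let b := nth 0 (filter P (iota 0 n)) i in
  [/\ b < n, P b & count P (iota 0 b) = i].
Proof.
elim: n i => [|n IHn] i //; rewrite count_iotaS -[n.+1]addn1 iotaD filter_cat nth_cat size_filter.
case: (ltnP i (count P (iota 0 n))) => [lt_i _|le_i].
  by case: (IHn i lt_i); split => //; lia.
case Pn: (P n) => /= lt_i; last lia.
have -> : i = count P (iota 0 n) by lia.
by rewrite subnn /= Pn addn1.
Qed.

Lemma nth_filter_iota_count n b : b < n -> P b ->
  nth 0 (filter P (iota 0 n)) (count P (iota 0 b)) = b.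
Proof.
move=> lt_bn Pb; rewrite -(subnKC (ltnW lt_bn)) iotaD filter_cat nth_cat size_filter.
by rewrite ltnn subnn -(subnSK lt_bn) /= Pb.
Qed.

Lemma last_witness n a : a < n -> P a ->
  exists z, [/\ a <= z < n, P z & forall l, z < l < n -> ~~ P l].
Proof.
elim: n => [|n IHn] // lt_an Pa; case Pn: (P n).
  by exists n; split => [||l]; [lia | | lia].
have lt_an' : a < n by rewrite ltn_neqAle -ltnS lt_an andbT; apply: contraTneq Pa => ->; rewrite Pn.
case: (IHn lt_an' Pa) => z [Hz Pz last_z]; exists z; split => //; first lia.
move=> l; case: (ltngtP l n) => [lt_ln Hl|lt_nl|-> _]; last by rewrite Pn.
- by apply: last_z; lia.
- lia.
Qed.

End CountIota.

Lemma count_nth_iota (P : pred nat) s :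
  count P s = count (fun i => P (nth 0 s i)) (iota 0 (size s)).
Proof. by rewrite -{1}(mkseq_nth 0 s) /mkseq count_map. Qed.

Lemma take_drop_iota s d c : d + c <= size s ->
  take c (drop d s) = map (nth 0 s) (iota d c).
Proof.
move=> le_dc; rewrite -{1}(mkseq_nth 0 s) /mkseq -map_drop -map_take drop_iota take_iota.
by congr (map _ (iota _ _)); lia.
Qed.

Lemma drop_iota_nth s d : d <= size s -> drop d s = map (nth 0 s) (iota d (size s - d)).
Proof.
by move=> le_d; rewrite -take_drop_iota ?subnKC // take_oversize // size_drop.
Qed.

Lemma foldr_maxn_ge l x : x \in l -> x <= foldr maxn 0 l.
Proof.
elim: l => [|y l IHl] //=; rewrite in_cons => /predU1P [->|/IHl]; first exact: leq_maxl.
by move/leq_trans; apply; apply: leq_maxr.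
Qed.

Lemma foldr_maxn_le l k : {in l, forall x, x <= k} -> foldr maxn 0 l <= k.
Proof.
elim: l => [|y l IHl] //= le_lk; rewrite geq_max le_lk ?mem_head //=.
by apply: IHl => x lx; apply: le_lk; rewrite in_cons lx orbT.
Qed.

Lemma foldr_maxn_mem l : l != [::] -> foldr maxn 0 l \in l.
Proof.
elim: l => [|x [|y l] IHl] //= _; first by rewrite maxn0 mem_head.
rewrite in_cons /maxn; case: ltnP => _; last by rewrite eqxx.
by rewrite IHl ?orbT.
Qed.

Lemma foldr_minn_mem x l : foldr minn x l \in x :: l.
Proof.
elim: l => [|y l IHl] /=; first by rewrite mem_head.
rewrite /minn; case: ltnP => _; rewrite !in_cons ?eqxx ?orbT //.
by move: IHl; rewrite in_cons => /orP [->|->]; rewrite ?orbT.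
Qed.

Lemma count_drop_two (s : seq nat) x d a b : d <= a -> a < b < size s ->
  nth 0 s a = x -> nth 0 s b = x -> 1 < count (fun y => y == x) (drop d s).
Proof.
move=> le_da Hab sa sb; rewrite count_nth_iota size_drop.
apply: (count_iota_two (a := a - d) (b := b - d)); rewrite /= ?nth_drop ?subnKC ?sa ?sb //; lia.
Qed.

Lemma count_two (s : seq nat) x a b : a < b < size s ->
  nth 0 s a = x -> nth 0 s b = x -> 1 < count (fun y => y == x) s.
Proof. by move=> Hab sa sb; rewrite -(drop0 s); apply: (count_drop_two (a := a) (b := b)). Qed.

(** * Ascent sequences *)

Lemma asc_cons x s : asc (x :: s) = (if s is y :: _ then x < y else false) + asc s.
Proof.
case: s => [|y s] //; rewrite /asc /=; congr (_ + _).
by rewrite -[1]addn0 iotaDl count_map; apply: eq_count.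
Qed.

Lemma asc_cat_dup a v b : asc (a ++ [:: v, v & b]) = asc (a ++ v :: b).
Proof.
elim: a => [|x a IHa]; first by rewrite asc_cons ltnn.
by rewrite !cat_cons asc_cons [RHS]asc_cons IHa; case: a {IHa}.
Qed.

Lemma asc_leq_size s : asc s <= (size s).-1.
Proof. by rewrite /asc -[leqRHS](size_iota 0) count_size. Qed.

Lemma leq_asc_cat a b : asc a <= asc (a ++ b).
Proof.
elim: a => [|x a IHa] //=; rewrite asc_cons [leqRHS]asc_cons.
by case: a IHa => [|y a] IHa //=; rewrite leq_add2l.
Qed.

Lemma is_ascentP s :
  reflect [/\ 0 < size s, nth 0 s 0 = 0 &
             forall j, 0 < j < size s -> nth 0 s j <= (asc (take j s)).+1]
          (is_ascent s).
Proof.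
rewrite /is_ascent -andbA; apply: (iffP and3P) => [[-> /eqP-> /allP ok_s]|[-> -> ok_s]].
  by split => // j Hj; apply: ok_s; rewrite mem_iota; lia.
by split => //; apply/allP => j; rewrite mem_iota => Hj; apply: ok_s; lia.
Qed.

Section AscentSeq.
Variable s : seq nat.
Hypothesis ascent_s : is_ascent s.

Lemma ascent_nth_leq j : j < size s -> nth 0 s j <= j.
Proof.
case/is_ascentP: ascent_s => _ s0 ok_s; case: j => [|j] lt_j; first by rewrite s0.
apply: leq_trans (ok_s j.+1 _) _; first lia.
by have := asc_leq_size (take j.+1 s); rewrite size_take lt_j.
Qed.

(* s_k = k is only possible if each of the first k steps is an ascent. *)
Lemma ascent_fixed_prefix k : k < size s -> nth 0 s k = k ->
  forall j, j <= k -> nth 0 s j = j.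
Proof.
case: k => [|k] lt_k sk j le_jk; first by move: le_jk; rewrite leqn0 => /eqP->.
case/is_ascentP: ascent_s => _ _ ok_s.
have asc_k : asc (take k.+1 s) = k.
  have := ok_s k.+1; rewrite sk lt_k => /(_ isT).
  by have := asc_leq_size (take k.+1 s); rewrite size_take lt_k /=; lia.
have step x : x < k -> nth 0 s x < nth 0 s x.+1.
  have /allP all_asc : all (fun i => nth 0 (take k.+1 s) i < nth 0 (take k.+1 s) i.+1) (iota 0 k).
    by rewrite -count_iota_all; move: asc_k; rewrite /asc size_take lt_k => ->.
  move=> lt_xk; have := all_asc x; rewrite mem_iota lt_xk => /(_ isT).
  by rewrite !nth_take //; lia.
have ge_nth x : x <= k -> x <= nth 0 s x.
  by elim: x => [|x IHx] // lt_xk; have := step x lt_xk; have := IHx (ltnW lt_xk); lia.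
case: (ltnP j k.+1) => [lt_jk|]; last by move=> ge_jk; have -> : j = k.+1 by lia.
by have := ge_nth j lt_jk; have := ascent_nth_leq (leq_ltn_trans le_jk lt_k); lia.
Qed.

End AscentSeq.

(** * Repeating and deleting an entry *)

Definition dup (p : nat) (t : seq nat) : seq nat := take p t ++ nth 0 t p :: drop p t.

Definition delete (q : nat) (s : seq nat) : seq nat := take q s ++ drop q.+1 s.

Section Dup.
Variables (t : seq nat) (p : nat).
Hypothesis lt_p : p < size t.
Local Notation v := (nth 0 t p).

Lemma take_nth_drop : t = take p t ++ v :: drop p.+1 t.
Proof. by rewrite -(drop_nth 0) // cat_take_drop. Qed.

Lemma dupE : dup p t = take p t ++ [:: v, v & drop p.+1 t].
Proof. by rewrite /dup (drop_nth 0). Qed.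

Lemma size_dup : size (dup p t) = (size t).+1.
Proof. by rewrite /dup size_cat /= size_take size_drop lt_p; lia. Qed.

Lemma nth_dup_le j : j <= p -> nth 0 (dup p t) j = nth 0 t j.
Proof.
rewrite leq_eqVlt => /predU1P [->|lt_jp]; rewrite /dup nth_cat size_take lt_p.
  by rewrite ltnn subnn.
by rewrite lt_jp nth_take.
Qed.

Lemma nth_dup_ge j : p <= j -> nth 0 (dup p t) j.+1 = nth 0 t j.
Proof.
move=> le_pj; rewrite /dup nth_cat size_take lt_p ltnNge (leqW le_pj) /=.
by rewrite subSn //= nth_drop subnKC.
Qed.

Lemma nth_dup_bump j : nth 0 (dup p t) (bump p j) = nth 0 t j.
Proof.
rewrite /bump; case: leqP => [le_pj|lt_jp]; first by rewrite add1n nth_dup_ge.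
by rewrite add0n nth_dup_le // ltnW.
Qed.

Lemma take_dup_le j : j <= p -> take j (dup p t) = take j t.
Proof.
move=> le_jp; rewrite /dup take_cat size_take lt_p.
case: ltnP => [lt_jp|le_pj]; first by rewrite take_takel // ltnW.
have -> : j = p by lia.
by rewrite subnn take0 cats0.
Qed.

Lemma take_dup_gt j : p < j -> j <= size t -> take j.+1 (dup p t) = dup p (take j t).
Proof.
move=> lt_pj le_j; rewrite /dup take_cat size_take lt_p ltnNge (ltnW (ltnW _)) //=.
rewrite take_takel ?nth_take // ?(ltnW lt_pj) // subSn ?(ltnW lt_pj) //=.
by rewrite take_drop subnK // ltnW.
Qed.

Lemma asc_dup : asc (dup p t) = asc t.
Proof. by rewrite dupE asc_cat_dup -take_nth_drop. Qed.

Lemma zero_dup : zero (dup p t) = zero t + (v == 0).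
Proof. by have := congr1 zero take_nth_drop; rewrite /zero dupE !count_cat /= => ->; lia. Qed.

Lemma rep_dup : rep (dup p t) = (rep t).+1.
Proof.
have mem_dup : dup p t =i t.
  move=> x; rewrite dupE [in RHS]take_nth_drop !mem_cat !in_cons.
  by case: (x == v); rewrite ?orbT.
have undup_dup : size (undup (dup p t)) = size (undup t).
  by apply/perm_size/uniq_perm; rewrite ?undup_uniq // => x; rewrite !mem_undup.
by rewrite /rep undup_dup size_dup subSn // size_undup.
Qed.

Lemma dup_neq_iota : dup p t != iota 0 (size (dup p t)).
Proof.
apply/eqP => E; have := nth_dup_ge (leqnn p); rewrite -(nth_dup_le (leqnn p)) E.
by rewrite size_dup !nth_iota //; lia.
Qed.

Lemma drop_dup_ge d : p <= d -> drop d.+1 (dup p t) = drop d t.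
Proof.
move=> le_pd; rewrite /dup drop_cat size_take lt_p ltnNge (leqW le_pd) /=.
by rewrite subSn //= drop_drop subnK.
Qed.

Lemma take_dup_succ : take p.+1 (dup p t) = take p.+1 t.
Proof.
rewrite /dup take_cat size_take lt_p ltnNge leqnSn /= subSnn /= take0.
by rewrite (take_nth 0) // cats1.
Qed.

End Dup.

Lemma dup_cat a v b : dup (size a) (a ++ v :: b) = a ++ [:: v, v & b].
Proof. by rewrite /dup take_size_cat // nth_cat ltnn subnn drop_size_cat. Qed.

Lemma delete_cat a v w b : delete (size a).+1 (a ++ [:: v, w & b]) = a ++ v :: b.
Proof.
elim: a => [|x a IHa]; first by rewrite /delete /= drop0.
by rewrite /delete /= in IHa *; rewrite IHa.
Qed.

Lemma size_delete s q : q < size s -> size (delete q s) = (size s).-1.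
Proof. by move=> lt_q; rewrite /delete size_cat size_take size_drop lt_q; lia. Qed.

Lemma dupK t p : p < size t -> delete p.+1 (dup p t) = t.
Proof.
by move=> lt_p; rewrite dupE // -{1}(size_takel (ltnW lt_p)) delete_cat -take_nth_drop.
Qed.

Lemma deleteK s p : p.+1 < size s -> nth 0 s p = nth 0 s p.+1 -> dup p (delete p.+1 s) = s.
Proof.
move=> lt_p s_p; have le_p := ltnW (ltnW lt_p).
have -> : s = take p s ++ [:: nth 0 s p, nth 0 s p & drop p.+2 s].
  by rewrite {1}(take_nth_drop (ltnW lt_p)) (drop_nth 0 lt_p) -s_p.
by rewrite -{1 2}(size_takel le_p) delete_cat dup_cat.
Qed.

Lemma is_ascent_dup t p : p < size t -> is_ascent (dup p t) = is_ascent t.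
Proof.
move=> lt_p; have size_d := size_dup lt_p.
apply/is_ascentP/is_ascentP => [[_ d0 ok_d]|[t_gt0 t0 ok_t]].
  split; [lia | by rewrite -(nth_dup_le lt_p (leq0n p)) |].
  move=> j Hj; case: (leqP j p) => [le_jp|lt_pj].
    by rewrite -(nth_dup_le lt_p le_jp) -(take_dup_le lt_p le_jp); apply: ok_d; lia.
  have lt_pj' : p < size (take j t) by rewrite size_take; case: ifP.
  rewrite -(nth_dup_ge lt_p (ltnW lt_pj)) -(asc_dup lt_pj') -take_dup_gt //; last lia.
  by apply: ok_d; lia.
split; [lia | by rewrite nth_dup_le |].
move=> j Hj; case: (ltngtP j p.+1) => [lt_jp|lt_pj|->].
- by rewrite nth_dup_le // take_dup_le //; apply: ok_t; lia.
- case: j Hj lt_pj => [|j] // Hj lt_pj.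
  have lt_pj' : p < size (take j t) by rewrite size_take; case: ifP; lia.
  rewrite (nth_dup_ge lt_p (ltnW lt_pj)) (take_dup_gt lt_p lt_pj) ?(asc_dup lt_pj'); last lia.
  by apply: ok_t; lia.
- rewrite (nth_dup_ge lt_p (leqnn p)) take_dup_succ //.
  case: (posnP p) => [->|p_gt0]; first by rewrite t0.
  apply: leq_trans (ok_t p _) _; first by rewrite p_gt0.
  by rewrite ltnS (take_nth 0) // -cats1 leq_asc_cat.
Qed.

(** * Right-to-left minima and rpos *)

Lemma is_rminP s i :
  reflect (forall j, i < j < size s -> nth 0 s i < nth 0 s j) (is_rmin s i).
Proof. by apply: (iffP allP) => ok_i j Hj; apply: ok_i; move: Hj; rewrite mem_iota; lia. Qed.

Lemma rminE s : rmin s = count (is_rmin s) (iota 0 (size s)).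
Proof. by rewrite /rmin /Prm size_filter. Qed.

Lemma rmin_leq_size s : rmin s <= size s.
Proof. by rewrite rminE count_iota_leq. Qed.

Section PrmTheory.
Variable s : seq nat.
Local Notation prm i := (nth 0 (Prm s) i).

Lemma nth_Prm i : i < rmin s ->
  [/\ prm i < size s, is_rmin s (prm i) & count (is_rmin s) (iota 0 (prm i)) = i].
Proof. by rewrite rminE => /nth_filter_iota. Qed.

Lemma Prm_count b : b < size s -> is_rmin s b ->
  prm (count (is_rmin s) (iota 0 b)) = b /\ count (is_rmin s) (iota 0 b) < rmin s.
Proof.
by move=> lt_b rmin_b; rewrite rminE nth_filter_iota_count // ltn_count_iota.
Qed.

Lemma Prm_inj i j : i < rmin s -> j < rmin s -> prm i = prm j -> i = j.
Proof.
by move=> /nth_Prm [_ _ ci] /nth_Prm [_ _ cj] eq_ij; rewrite -ci -cj eq_ij.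
Qed.

Lemma ltn_Prm j i : j < i -> i < rmin s -> prm j < prm i.
Proof.
move=> lt_ji lt_i; case: (nth_Prm lt_i) => _ _ ci.
case: (@nth_Prm j (ltn_trans lt_ji lt_i)) => _ _ cj.
by rewrite ltnNge; apply: contraTN lt_ji => /(leq_count_iota (is_rmin s)); rewrite ci cj -leqNgt.
Qed.

Lemma leq_Prm i : i < rmin s -> i <= prm i.
Proof. by case/nth_Prm => _ _ {1}<-; apply: count_iota_leq. Qed.

Lemma Rmin_nth i : i < rmin s -> nth 0 (Rmin s) i = nth 0 s (prm i).
Proof. by move=> lt_i; rewrite /Rmin (nth_map 0). Qed.

Lemma is_rmin_last_occ z : z < size s ->
  (forall l, z < l < size s -> nth 0 s z <= nth 0 s l) ->
  (forall l, z < l < size s -> nth 0 s l != nth 0 s z) -> is_rmin s z.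
Proof.
move=> _ ge_z neq_z; apply/is_rminP => l Hl.
by rewrite ltn_neqAle eq_sym neq_z // ge_z.
Qed.

End PrmTheory.

Lemma rmin_iota k : rmin (iota 0 k) = k.
Proof.
rewrite rminE size_iota; apply/eqP; rewrite count_iota_all; apply/allP => x _.
by apply/is_rminP => j; rewrite size_iota => Hj; rewrite !nth_iota; lia.
Qed.

Lemma rmin_neq_size t : is_ascent t -> t != iota 0 (size t) -> rmin t != size t.
Proof.
move=> ascent_t; apply: contraNneq; rewrite rminE => /eqP; rewrite count_iota_all => /allP all_rmin.
have ge_nth x : x < size t -> x <= nth 0 t x.
  elim: x => [|x IHx] // lt_x.
  have /is_rminP/(_ x.+1) : is_rmin t x by apply: all_rmin; rewrite mem_iota; lia.
  by have := IHx (ltnW lt_x); lia.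
apply/eqP/(@eq_from_nth _ 0); rewrite ?size_iota // => x lt_x.
by rewrite nth_iota // add0n; have := ge_nth x lt_x; have := ascent_nth_leq ascent_t lt_x; lia.
Qed.

Lemma Rmin_eq0 s i : is_ascent s -> i < rmin s -> (nth 0 (Rmin s) i == 0) = (i == 0).
Proof.
case/is_ascentP => s_gt0 s0 _ lt_i; rewrite Rmin_nth //.
case: (@last_witness (fun x => nth 0 s x == 0) _ _ s_gt0) => [|z]; first by rewrite s0.
move=> [/andP [_ lt_z] /eqP sz last_z].
have rmin_z : is_rmin s z.
  by apply: is_rmin_last_occ => // l Hl; rewrite sz // last_z.
have count_z : count (is_rmin s) (iota 0 z) = 0.
  apply: count_pred0_in => x; rewrite mem_iota => Hx.
  by apply/is_rminP => /(_ z); rewrite sz; lia.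
case: (Prm_count lt_z rmin_z); rewrite count_z => prm0 _.
case: i lt_i => [|i] lt_i; first by rewrite prm0 sz.
case: (@nth_Prm s i (ltnW lt_i)) => _ /is_rminP ok_i _; case: (nth_Prm lt_i) => lt_prm _ _.
have lt_ii := ltn_Prm (ltnSn i) lt_i.
have := ok_i (nth 0 (Prm s) i.+1); rewrite lt_ii lt_prm => /(_ isT) lt_v.
by apply/negbTE; rewrite -lt0n; apply: leq_ltn_trans lt_v.
Qed.

Definition fixed_rmin_prefix (t : seq nat) (k : nat) : Prop :=
  forall j, j < k -> is_rmin t j /\ nth 0 t j = j.

Section FixedPrefix.
Variables (t : seq nat) (k : nat).
Hypotheses (le_k : k <= size t) (prefix_k : fixed_rmin_prefix t k).

Lemma fixed_prefix_lb x : k <= x < size t -> k <= nth 0 t x.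
Proof.
case: k prefix_k => [|k'] // prefix Hx; case: (prefix k' (ltnSn k')) => /is_rminP ok tk.
by have := ok x; rewrite tk; lia.
Qed.

Lemma fixed_prefix_count : count (is_rmin t) (iota 0 k) = k.
Proof.
by apply/eqP; rewrite count_iota_all; apply/allP => j; rewrite mem_iota => /prefix_k [].
Qed.

Lemma fixed_prefix_Prm j : j < k -> nth 0 (Prm t) j = j.
Proof.
move=> lt_j; case: (prefix_k lt_j) => rmin_j _.
have count_j : count (is_rmin t) (iota 0 j) = j.
  apply/eqP; rewrite count_iota_all; apply/allP => x; rewrite mem_iota => Hx.
  by case: (prefix_k (j := x)); lia.
by case: (Prm_count (leq_trans lt_j le_k) rmin_j); rewrite count_j.
Qed.

(* The last occurrence z of the value k is the k-th right-to-left minimum, and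
   the occurrences at k and z witness rpos_cond t k. *)
Lemma rpos_cond_repeat l : nth 0 t k = k -> k < l < size t -> nth 0 t l = k ->
  k < rmin t /\ rpos_cond t k.
Proof.
move=> tk Hl tl; have lt_l : l < size t by case/andP: Hl.
case: (@last_witness (fun x => nth 0 t x == k) _ _ lt_l) => [|z]; first by rewrite /= tl.
move=> [/andP [le_lz lt_z] /eqP tz last_z].
have rmin_z : is_rmin t z.
  apply: is_rmin_last_occ => // x Hx; last by rewrite tz last_z.
  by rewrite tz fixed_prefix_lb //; lia.
have count_z : count (is_rmin t) (iota 0 z) = k.
  rewrite -(subnKC (_ : k <= z)); last lia.
  rewrite iotaD count_cat fixed_prefix_count (@count_pred0_in _ (iota _ _)) ?addn0 // => x.
  rewrite mem_iota => Hx; apply/is_rminP => /(_ z); rewrite tz.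
  by have := fixed_prefix_lb (x := x); lia.
case: (Prm_count lt_z rmin_z); rewrite count_z => prm_k lt_k; split => //.
have Rmin_k : nth 0 (Rmin t) k = k by rewrite Rmin_nth // prm_k.
rewrite /rpos_cond; case: eqP => [k0|/eqP k_neq0].
  move: Rmin_k tk tz; rewrite k0 => -> tk tz.
  by rewrite (count_two (a := 0) (b := z)) //; lia.
rewrite Rmin_k fixed_prefix_Prm ?prednK ?lt0n // ?ltn_predL ?lt0n //.
by rewrite (count_drop_two (a := k) (b := z)) //; lia.
Qed.

End FixedPrefix.

(* Follow the fixed right-to-left minima 0, 1, ...; they cannot fill t, and the
   value k at the first position k that is not a right-to-left minimum recurs. *)
Lemma rpos_cond_exists t k : is_ascent t -> t != iota 0 (size t) -> k <= size t ->
  fixed_rmin_prefix t k -> exists2 m, k <= m < rmin t & rpos_cond t m.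
Proof.
move=> ascent_t neq_iota; move Ed: (size t - k) => d.
elim: d k Ed => [|d IHd] k Ed le_k prefix_k.
  case/negP: neq_iota; apply/eqP/(@eq_from_nth _ 0); rewrite ?size_iota // => x lt_x.
  by rewrite nth_iota // add0n; case: (prefix_k x) => //; lia.
have lt_k : k < size t by lia.
have tk : nth 0 t k = k.
  by have := ascent_nth_leq ascent_t lt_k; have := @fixed_prefix_lb t k le_k prefix_k k; lia.
have [rmin_k|] := boolP (is_rmin t k).
  have prefix_k1 : fixed_rmin_prefix t k.+1.
    by move=> j; rewrite ltnS leq_eqVlt => /predU1P [->|/prefix_k].
  by case: (IHd k.+1 _ lt_k prefix_k1) => [|m Hm]; [lia | exists m => //; lia].
rewrite /is_rmin -has_predC => /hasP [l]; rewrite mem_iota /= -leqNgt tk => Hl le_tl.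
have tl : nth 0 t l = k by have := @fixed_prefix_lb t k le_k prefix_k l; lia.
case: (rpos_cond_repeat le_k prefix_k tk (l := l)) => // [|lt_k' cond_k]; first lia.
by exists k; rewrite ?leqnn.
Qed.

Lemma rpos_cond_leq_rpos t m : rmin t != size t -> m < rmin t -> rpos_cond t m ->
  m <= rpos t.
Proof.
move=> neq_t lt_m cond_m; rewrite /rpos (negbTE neq_t).
by rewrite foldr_maxn_ge // mem_filter cond_m mem_iota.
Qed.

Lemma rpos_leq t k : (forall m, k < m < rmin t -> ~~ rpos_cond t m) -> rpos t <= k.
Proof.
move=> no_cond; rewrite /rpos; case: ifP => // _; apply: foldr_maxn_le => m.
rewrite mem_filter mem_iota => /andP [cond_m Hm]; rewrite leqNgt.
by apply: contraL cond_m => lt_km; apply: no_cond; lia.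
Qed.

Lemma rpos_spec t : is_ascent t -> t != iota 0 (size t) ->
  rpos t < rmin t /\ rpos_cond t (rpos t).
Proof.
move=> ascent_t neq_iota; have neq_t := rmin_neq_size ascent_t neq_iota.
case: (rpos_cond_exists ascent_t neq_iota (leq0n _)) => // m Hm cond_m.
have /foldr_maxn_mem : filter (rpos_cond t) (iota 0 (rmin t)) != [::].
  apply/eqP => no_cond.
  have : m \in filter (rpos_cond t) (iota 0 (rmin t)) by rewrite mem_filter cond_m mem_iota.
  by rewrite no_cond.
have -> : foldr maxn 0 (filter (rpos_cond t) (iota 0 (rmin t))) = rpos t.
  by rewrite /rpos (negbTE neq_t).
by rewrite mem_filter mem_iota => /andP [-> /=]; rewrite add0n.
Qed.

(** * Repeating a right-to-left minimum *)

Lemma ltn_bump2 h i j : (bump h i < bump h j) = (i < j).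
Proof. by rewrite !ltnNge leq_bump2. Qed.

Lemma filter_neq_iota_bump p n : p <= n ->
  filter (predC1 p) (iota 0 n.+1) = map (bump p) (iota 0 n).
Proof.
move=> le_pn; set k := n - p.
have -> : iota 0 n.+1 = iota 0 p ++ p :: iota p.+1 k.
  by rewrite -[p :: _]/(iota p k.+1) -iotaD; congr iota; lia.
have -> : iota 0 n = iota 0 p ++ iota p k by rewrite -iotaD; congr iota; lia.
rewrite filter_cat map_cat /= eqxx /=.
have -> : filter (predC1 p) (iota 0 p) = iota 0 p.
  by apply/all_filterP/allP => x; rewrite mem_iota /=; lia.
have -> : filter (predC1 p) (iota p.+1 k) = iota p.+1 k.
  by apply/all_filterP/allP => x; rewrite mem_iota /=; lia.
congr (_ ++ _); first by rewrite map_id_in // => x; rewrite mem_iota /bump; case: leqP; lia.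
by rewrite -[p.+1]add1n iotaDl; apply/eq_in_map => x; rewrite mem_iota /bump; case: leqP; lia.
Qed.

Section DupRmin.
Variables (t : seq nat) (p : nat).
Hypotheses (lt_p : p < size t) (rmin_p : is_rmin t p).
Local Notation s := (dup p t).

Lemma is_rmin_dup_p : is_rmin s p = false.
Proof.
apply/is_rminP => /(_ p.+1); rewrite (size_dup lt_p) ltnSn ltnS lt_p => /(_ isT).
by rewrite nth_dup_le // nth_dup_ge // ltnn.
Qed.

Lemma is_rmin_dup_bump j : j < size t -> is_rmin s (bump p j) = is_rmin t j.
Proof.
move=> lt_j; apply/is_rminP/is_rminP; rewrite (size_dup lt_p) (nth_dup_bump lt_p) => ok_j k Hk.
  have := ok_j (bump p k); rewrite (nth_dup_bump lt_p); apply; rewrite ltn_bump2.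
  by case/andP: Hk => -> lt_k; rewrite /bump; case: (leqP p k) => /= _; lia.
case: (eqVneq k p) Hk => [->|k_neq_p] Hk.
  rewrite (nth_dup_le lt_p) //; apply: ok_j; rewrite lt_p andbT.
  by move: Hk; rewrite /bump; case: (leqP p j) => /=; lia.
have bumpK_k := unbumpK (k_neq_p : k \in predC1 p).
rewrite -bumpK_k (nth_dup_bump lt_p); apply: ok_j.
move: Hk; rewrite -{1}bumpK_k ltn_bump2 => /andP [-> lt_k] /=.
by move: lt_k k_neq_p; rewrite /unbump; case: (ltnP p k) => /=; lia.
Qed.

Lemma Prm_dup : Prm s = map (bump p) (Prm t).
Proof.
rewrite /Prm (size_dup lt_p).
have -> : filter (is_rmin t) (iota 0 (size t)) =
          filter (preim (bump p) (is_rmin s)) (iota 0 (size t)).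
  by apply: eq_in_filter => x; rewrite mem_iota /= => lt_x; rewrite is_rmin_dup_bump.
rewrite -filter_map -filter_neq_iota_bump ?(ltnW lt_p) // -filter_predI.
by apply: eq_filter => x /=; case: (eqVneq x p) => [->|]; rewrite ?is_rmin_dup_p ?andbT.
Qed.

Lemma rmin_dup : rmin s = rmin t.
Proof. by rewrite /rmin Prm_dup size_map. Qed.

Lemma Rmin_dup : Rmin s = Rmin t.
Proof. by rewrite /Rmin Prm_dup -map_comp; apply: eq_map => x /=; apply: nth_dup_bump. Qed.

End DupRmin.

Definition occ_rpos (s : seq nat) : seq nat :=
  filter (fun k => nth 0 s k == nth 0 (Rmin s) (rpos s)) (iota 0 (size s)).

Lemma sebr_adjacent s F p : occ_rpos s = rcons (rcons F p) p.+1 -> sebr s = 0.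
Proof.
rewrite /sebr -/(occ_rpos s) => ->; rewrite !size_rcons /=.
by rewrite !subSS !subn0 !nth_rcons !size_rcons ltnn eqxx ltnSn ltnn eqxx subnn take0.
Qed.

Lemma sebr_gt0 s F a b : occ_rpos s = rcons (rcons F a) b -> a.+1 < b -> b < size s ->
  (forall k, a < k < b -> 0 < nth 0 s k) -> 0 < sebr s.
Proof.
rewrite /sebr -/(occ_rpos s) => -> lt_ab lt_b pos_ab; rewrite !size_rcons /=.
rewrite !subSS !subn0 !nth_rcons !size_rcons ltnn eqxx ltnSn ltnn eqxx.
rewrite take_drop_iota; last lia.
rewrite -(subnSK lt_ab) /=.
set m := foldr minn _ _; have : m \in nth 0 s a.+1 :: map (nth 0 s) (iota a.+2 (b - a.+2)).
  exact: foldr_minn_mem.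
rewrite -map_cons => /mapP [k]; rewrite -/(iota a.+1 (b - a.+2).+1) mem_iota => Hk ->.
by apply: pos_ab; lia.
Qed.

Lemma maxs_prefix u p : p <= size u -> (forall k, p <= k < size u -> nth 0 u k != k) ->
  maxs u = count (fun j => nth 0 u j == j) (iota 0 p).
Proof.
move=> le_p late; rewrite /maxs (iota0_split le_p) count_cat.
rewrite (@count_pred0_in _ (iota p _)) ?addn0 // => k.
by rewrite mem_iota => Hk; apply: late; lia.
Qed.

(* The preimage of (i, t) under f_2. *)
Definition ins (i : nat) (t : seq nat) : seq nat := dup (nth 0 (Prm t) i) t.

Section Ins.
Variables (t : seq nat) (i : nat).
Hypothesis lt_i : i < rmin t.
Local Notation p := (nth 0 (Prm t) i).
Local Notation s := (ins i t).

Let lt_p : p < size t. Proof. by case: (nth_Prm lt_i). Qed.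
Let rmin_p : is_rmin t p. Proof. by case: (nth_Prm lt_i). Qed.

Lemma size_ins : size s = (size t).+1.
Proof. exact: size_dup. Qed.

Lemma rmin_ins : rmin s = rmin t.
Proof. exact: rmin_dup. Qed.

Lemma nth_Prm_ins j : j < rmin t -> nth 0 (Prm s) j = nth 0 (Prm t) j + (i <= j).
Proof.
move=> lt_j; rewrite /ins Prm_dup // (nth_map 0) // /bump addnC.
case: (ltngtP i j) => [lt_ij|lt_ji|->]; last by rewrite leqnn.
- by rewrite ltnW // ltn_Prm.
- by rewrite leqNgt ltn_Prm.
Qed.

Lemma rpos_cond_ins : rpos_cond s i.
Proof.
have Rmin_i : nth 0 (Rmin s) i = nth 0 t p by rewrite /ins Rmin_dup // Rmin_nth.
have s_p : nth 0 s p = nth 0 t p by rewrite nth_dup_le.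
have s_p1 : nth 0 s p.+1 = nth 0 t p by rewrite nth_dup_ge.
rewrite /rpos_cond; case: eqP => [i0|/eqP i_neq0].
  have -> : nth 0 (Rmin s) 0 = nth 0 t p by rewrite -{2}i0.
  by rewrite (count_two (a := p) (b := p.+1)) // size_ins; lia.
rewrite Rmin_i nth_Prm_ins; last lia.
rewrite (count_drop_two (a := p) (b := p.+1)) // ?size_ins; last lia.
by rewrite [i <= _]leqNgt ltn_predL lt0n i_neq0 addn0 ltn_Prm // ltn_predL lt0n.
Qed.

Lemma rpos_cond_ins_gt m : i < m < rmin t -> rpos_cond s m = rpos_cond t m.
Proof.
case/andP=> lt_im lt_m; have [m_gt0 le_im] : 0 < m /\ i <= m.-1 by lia.
have le_p : p <= nth 0 (Prm t) m.-1.
  by case: (ltngtP i m.-1) le_im => // [lt_i' _|<-]; [apply/ltnW/ltn_Prm; lia|].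
rewrite /rpos_cond /ins Rmin_dup // -/(ins i t) nth_Prm_ins; last lia.
by rewrite (negbTE (lt0n_neq0 m_gt0)) le_im addn1 (drop_dup_ge lt_p (leqW le_p)).
Qed.

Lemma rpos_ins : rmin t != size t -> rpos t <= i -> rpos s = i.
Proof.
move=> neq_t le_i.
have neq_s : rmin s != size s by rewrite rmin_ins size_ins; have := rmin_leq_size t; lia.
apply/eqP; rewrite eqn_leq (rpos_cond_leq_rpos neq_s _ rpos_cond_ins) ?rmin_ins // andbT.
apply: rpos_leq => m; rewrite rmin_ins => Hm; rewrite rpos_cond_ins_gt //.
apply: contraL le_i => cond_m; rewrite -ltnNge.
by apply: leq_trans (rpos_cond_leq_rpos neq_t _ cond_m); lia.
Qed.

Lemma sebr_ins : rpos s = i -> sebr s = 0.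
Proof.
move=> rpos_s; apply: (@sebr_adjacent _ (filter (fun k => nth 0 t k == nth 0 t p) (iota 0 p)) p).
rewrite /occ_rpos rpos_s /ins Rmin_dup // Rmin_nth // size_dup //.
have -> : (size t).+1 = p + (size t - p.+1).+2 by lia.
rewrite iotaD filter_cat add0n /= nth_dup_le // nth_dup_ge // eqxx.
have -> : [seq k <- iota p.+2 (size t - p.+1) | nth 0 (dup p t) k == nth 0 t p] = [::].
  apply/eqP; rewrite -size_eq0 size_filter; apply/eqP/count_pred0_in => k.
  rewrite mem_iota => Hk; rewrite -(prednK (_ : 0 < k)) ?nth_dup_ge; try lia.
  by rewrite neq_ltn; move/is_rminP: rmin_p => -> //; lia.
rewrite -!cats1 -catA; congr (_ ++ _).
by apply: eq_in_filter => k; rewrite mem_iota => Hk; rewrite nth_dup_le //; lia.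
Qed.

Lemma zero_ins : is_ascent t -> zero s = zero t + (i == 0).
Proof. by move=> ascent_t; rewrite zero_dup // -Rmin_nth // Rmin_eq0. Qed.

Section NoLateFixedPoint.
Hypotheses (ascent_t : is_ascent t) (neq_iota : t != iota 0 (size t)) (le_i : rpos t <= i).

(* A fixed point at or after p would make 0, ..., p fixed right-to-left minima,
   forcing rpos t > p >= i. *)
Lemma no_fixed_point_from_p k : p <= k < size t -> nth 0 t k != k.
Proof.
case/andP=> le_pk lt_k; apply/eqP => tk; have fixed := ascent_fixed_prefix ascent_t lt_k tk.
have prefix : fixed_rmin_prefix t p.+1.
  move=> j; rewrite ltnS => le_jp; split; last by apply: fixed; lia.
  apply/is_rminP => l Hl; case: (leqP l k) => [le_lk|lt_kl]; first by rewrite !fixed //; lia.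
  by move/is_rminP: rmin_p => /(_ l); rewrite (fixed p) // (fixed j) //; lia.
case: (rpos_cond_exists ascent_t neq_iota lt_p prefix) => m Hm cond_m.
have := rpos_cond_leq_rpos (rmin_neq_size ascent_t neq_iota) _ cond_m.
by have := leq_Prm lt_i; lia.
Qed.

Lemma maxs_ins : maxs s = maxs t.
Proof.
rewrite (@maxs_prefix _ p) ?size_ins 1?(@maxs_prefix t p) //; try lia.
- by apply: eq_in_count => j; rewrite mem_iota /= => Hj; rewrite nth_dup_le //; lia.
- exact: no_fixed_point_from_p.
move=> k /andP [le_pk lt_k]; case: (ltngtP p k) => [lt_pk|lt_kp|<-]; [|lia|].
  rewrite -(prednK (_ : 0 < k)) ?nth_dup_ge; try lia.
  by have := ascent_nth_leq ascent_t (_ : k.-1 < size t); lia.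
by rewrite nth_dup_le // no_fixed_point_from_p ?leqnn.
Qed.

Lemma ealm_ins : ealm s = ealm t.
Proof.
have le_max : maxs t <= p.
  by rewrite (@maxs_prefix t p) ?count_iota_leq //; [lia | exact: no_fixed_point_from_p].
by rewrite /ealm maxs_ins size_ins !ifT ?nth_dup_le //; lia.
Qed.

End NoLateFixedPoint.

End Ins.

(** * Deleting the rpos-th right-to-left minimum *)

Section DeleteRpos.
Variable s : seq nat.
Hypotheses (ascent_s : is_ascent s) (neq_iota : s != iota 0 (size s)) (sebr_s : sebr s = 0).
Local Notation m := (rpos s).
Local Notation q := (nth 0 (Prm s) m).
Local Notation v := (nth 0 s q).

Let lt_m : m < rmin s. Proof. by case: (rpos_spec ascent_s neq_iota). Qed.
Let cond_m : rpos_cond s m. Proof. by case: (rpos_spec ascent_s neq_iota). Qed.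
Let lt_q : q < size s. Proof. by case: (nth_Prm lt_m). Qed.
Let rmin_q : is_rmin s q. Proof. by case: (nth_Prm lt_m). Qed.

Lemma occ_before_rpos : exists2 k, k < q & nth 0 s k = v /\ (0 < m -> nth 0 (Prm s) m.-1 < k).
Proof.
set d := if m == 0 then 0 else (nth 0 (Prm s) m.-1).+1.
have le_dq : d <= q by rewrite /d; case: eqP => // m_neq0; apply: ltn_Prm => //; lia.
have : 1 < count (fun k => nth 0 s k == v) (iota d (size s - d)).
  move: cond_m; rewrite /rpos_cond /d; case: eqP => [m0|m_neq0].
    have -> : nth 0 (Rmin s) 0 = v by rewrite -{2}m0 Rmin_nth.
    by rewrite subn0 (count_nth_iota (fun x => x == v)).
  rewrite (Rmin_nth lt_m) drop_iota_nth ?count_map //.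
  by apply: leq_trans (ltn_Prm _ lt_m) (ltnW lt_q); lia.
rewrite (@count_iota_split _ d q) ?le_dq // eqxx.
rewrite (@count_pred0_in _ (iota q.+1 _)) => [|k]; last first.
  rewrite mem_iota => Hk; move/is_rminP: rmin_q => /(_ k) lt_v.
  by rewrite neq_ltn lt_v ?orbT //; lia.
rewrite addn0 addn1 ltnS -has_count => /hasP [k]; rewrite mem_iota => Hk /eqP sk.
exists k; first lia.
by split => // m_gt0; move: Hk; rewrite /d (negbTE (lt0n_neq0 m_gt0)); lia.
Qed.

(* Entries strictly between the last two occurrences of v are positive, so
   sebr s > 0 unless these occurrences are adjacent. *)
Lemma rpos_plateau : 0 < q /\ nth 0 s q.-1 = v.
Proof.
case: occ_before_rpos => k lt_kq [sk after_prev].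
case: (@last_witness (fun x => nth 0 s x == v) q k lt_kq) => [|a]; first by rewrite /= sk.
move=> [/andP [le_ka lt_aq] /eqP sa no_occ].
suff E : q = a.+1 by split; [rewrite E | rewrite -sa E].
apply/eqP; rewrite eqn_leq lt_aq andbT leqNgt; apply/negP => lt_a1q.
have occ : occ_rpos s = rcons (rcons (filter (fun x => nth 0 s x == v) (iota 0 a)) a) q.
  rewrite /occ_rpos (Rmin_nth lt_m).
  have -> : iota 0 (size s) = iota 0 a ++ iota a (q - a) ++ iota q (size s - q).
    by rewrite (iota0_split (ltnW lt_q)) (iota0_split (ltnW lt_aq)) -catA.
  rewrite -(subnSK lt_aq) -(subnSK lt_q) !filter_cat /= sa eqxx.
  rewrite (@eq_in_filter _ _ pred0 (iota a.+1 _)) ?filter_pred0 => [|x]; last first.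
    by rewrite mem_iota => Hx; apply/negbTE/no_occ; lia.
  rewrite (@eq_in_filter _ _ pred0 (iota q.+1 _)) ?filter_pred0 => [|x]; last first.
    rewrite mem_iota => Hx; apply/negbTE; rewrite neq_ltn.
    by move/is_rminP: rmin_q => -> //; rewrite ?orbT //; lia.
  by rewrite -!cats1 -catA.
suff : 0 < sebr s by rewrite sebr_s.
apply: (sebr_gt0 occ lt_a1q lt_q) => x Hx; have sx_neq := no_occ x Hx.
case: (posnP m) => [m0|m_gt0].
  have v0 : v = 0 by apply/eqP; rewrite -(Rmin_nth lt_m) Rmin_eq0 // m0.
  by rewrite lt0n; move: sx_neq; rewrite v0.
have lt_prev := after_prev m_gt0.
case: (@nth_Prm s m.-1 _) => [|_ /is_rminP ok_prev _]; first lia.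
by apply: leq_ltn_trans (leq0n _) (ok_prev x _); lia.
Qed.

Local Notation t := (delete q s).

Lemma dup_delete_rpos : dup q.-1 t = s.
Proof.
case: rpos_plateau => q_gt0 s_q1.
by have := @deleteK s q.-1; rewrite prednK //; apply.
Qed.

Let q_gt0 : 0 < q. Proof. by case: rpos_plateau. Qed.

Let size_t : size t = (size s).-1. Proof. exact: size_delete. Qed.

Let lt_q1 : q.-1 < size t. Proof. by rewrite size_t; lia. Qed.

Let nth_t l : q.-1 <= l -> nth 0 t l = nth 0 s l.+1.
Proof. by move=> le_l; rewrite -[in RHS]dup_delete_rpos nth_dup_ge. Qed.

Let rmin_t : is_rmin t q.-1.
Proof.
apply/is_rminP => l Hl; rewrite !nth_t ?prednK //; try lia.
by move/is_rminP: rmin_q => -> //; rewrite size_t in Hl; lia.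
Qed.

Let ascent_t : is_ascent t.
Proof. by rewrite -(is_ascent_dup lt_q1) dup_delete_rpos. Qed.

Let rmin_s : rmin s = rmin t.
Proof. by rewrite -[in LHS]dup_delete_rpos rmin_dup. Qed.

Let ins_rpos : ins m t = s /\ m < rmin t.
Proof.
case: (Prm_count lt_q1 rmin_t); set i := count _ _ => prm_i lt_i.
have ins_i : ins i t = s by rewrite /ins prm_i dup_delete_rpos.
suff i_m : i = m by move: ins_i lt_i; rewrite i_m => -> ->.
apply: (@Prm_inj s); [by rewrite rmin_s | exact: lt_m |].
by rewrite -{1}ins_i nth_Prm_ins // prm_i leqnn addn1 prednK.
Qed.

Let rpos_t : rpos t <= m.
Proof.
case: ins_rpos => ins_m lt_m'; apply: rpos_leq => k Hk; case/andP: (Hk) => lt_mk lt_k.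
apply: contraL lt_mk => cond_k; rewrite -leqNgt.
apply: (rpos_cond_leq_rpos (rmin_neq_size ascent_s neq_iota)); first by rewrite rmin_s.
by have := rpos_cond_ins_gt lt_m' Hk; rewrite ins_m => ->.
Qed.

Lemma delete_rpos_neq_iota : size s != (rmin s).+1 -> t != iota 0 (size t).
Proof.
apply: contra_neq => /(congr1 rmin); rewrite rmin_iota rmin_s => ->.
by rewrite size_t; lia.
Qed.

Lemma delete_rpos_spec :
  [/\ is_ascent t, rpos t <= m < rmin t, size t = (size s).-1 & ins m t = s].
Proof. by case: ins_rpos => ins_m lt_m'; rewrite rpos_t. Qed.

End DeleteRpos.

Definition f2 (s : seq nat) : nat * seq nat := (rpos s, delete (nth 0 (Prm s) (rpos s)) s).

Lemma f2_spec s : inT2 s ->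
  [/\ inAstar (f2 s).2, rpos (f2 s).2 <= rpos s < rmin (f2 s).2,
      size (f2 s).2 = (size s).-1 & ins (rpos s) (f2 s).2 = s].
Proof.
case/andP=> /andP [/andP [ascent_s neq_iota] size_s] /eqP sebr_s.
case: (delete_rpos_spec ascent_s neq_iota sebr_s) => ascent_t Hi size_t ins_s.
by rewrite /inAstar ascent_t delete_rpos_neq_iota.
Qed.

Lemma ins_stats i t : is_ascent t -> t != iota 0 (size t) -> rpos t <= i < rmin t ->
  asc (ins i t) = asc t /\ maxs (ins i t) = maxs t /\ ealm (ins i t) = ealm t /\
  rmin (ins i t) = rmin t /\ zero (ins i t) = zero t + (i == 0) /\ rep (ins i t) = (rep t).+1.
Proof.
move=> ascent_t neq_iota /andP [le_i lt_i]; have [lt_p _ _] := nth_Prm lt_i.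
do ![split]; rewrite ?asc_dup ?maxs_ins ?ealm_ins ?rmin_ins ?zero_ins ?rep_dup //.
Qed.

Lemma ins_inT2 n i t : target2 n (i, t) ->
  [/\ inT2 (ins i t), inA n (ins i t) & f2 (ins i t) = (i, t)].
Proof.
rewrite /target2 /inAstar /inA /=.
move=> /andP [/andP [/andP [ascent_t neq_iota] /andP [_ /eqP size_t]] /andP [le_i lt_i]].
have [lt_p _ _] := nth_Prm lt_i; have neq_t := rmin_neq_size ascent_t neq_iota.
have rpos_s := rpos_ins lt_i neq_t le_i.
have ascent_s : is_ascent (ins i t) by rewrite /ins is_ascent_dup.
split.
- rewrite /inT2 /inAstar ascent_s dup_neq_iota // sebr_ins // eqxx andbT /=.
  by rewrite size_ins // rmin_ins // eqSS eq_sym.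
- have t_gt0 : 0 < size t by case/is_ascentP: ascent_t.
  by rewrite /inA ascent_s size_ins //=; apply/eqP; lia.
- by rewrite /f2 rpos_s nth_Prm_ins // leqnn addn1 dupK.
Qed.

Theorem mainTheorem9 (n : nat) :
  exists f : seq nat -> nat * seq nat,
    (* f maps T_2 ∩ A_n into the target set *)
    (forall s, inT2 s -> inA n s -> target2 n (f s)) /\
    (* injective on T_2 ∩ A_n *)
    (forall s t, inT2 s -> inA n s -> inT2 t -> inA n t -> f s = f t -> s = t) /\
    (* surjective onto the target set *)
    (forall p, target2 n p -> exists s, [/\ inT2 s, inA n s & f s = p]) /\
    (* form of f_2 and statistics *)
    (forall s, inT2 s -> inA n s ->
       let ss := (f s).2 in
       (f s).1 = rpos s /\
       asc s = asc ss /\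
       maxs s = maxs ss /\
       ealm s = ealm ss /\
       rmin s = rmin ss /\
       zero s = zero ss + (rpos s == 0) /\
       rep s = (rep ss).+1).
Proof.
exists f2; split; [|split; [|split]].
- move=> s Ts /andP [_ /eqP size_s]; case: (f2_spec Ts) => Astar_t Hi size_t _.
  rewrite /target2 -[(f2 s).1]/(rpos s) Astar_t Hi /inA size_t size_s eqxx andbT.
  by case/andP: Astar_t => ->.
- move=> s t Ts _ Tt _ E.
  case: (f2_spec Ts) => _ _ _ <-; case: (f2_spec Tt) => _ _ _ <-.
  by rewrite -[rpos s]/((f2 s).1) -[rpos t]/((f2 t).1) E.
- by case=> i t /ins_inT2 [Ts As fs]; exists (ins i t).
- move=> s Ts _ ss; rewrite {}/ss; split => //.
  case: (f2_spec Ts) => /andP [ascent_t neq_iota] Hi _.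
  move: (f2 s).2 (rpos s) ascent_t neq_iota Hi => t i ascent_t neq_iota Hi <-.
  exact: ins_stats.
Qed.
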